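(* Let $F \in \mathbb{C}^{n \times n}$ be a unitary matrix with $|F_{ij}|^2 \leq \frac{c}{n}$ for all $i,j$ (for some constant $c > 0$), let $I\in\mathbb{C}^{n\times n}$ be the identity, and let $A = [F \enspace I] \in \mathbb{C}^{n \times 2n}$. Let $1\le k,t\le n$ be integers. Then $$\left(1-\sqrt{\frac{ckt}{n}}\right) \| x \|^2_2 \leq \|Ax\|^2_2 \leq \left(1+\sqrt{\frac{ckt}{n}}\right) \| x \|^2_2$$ for all $x \in M_{k,t}$.
   Context: $M_{k,t}$ is the set of $(k,t)$-sparse vectors in $\mathbb{C}^{2n}$, i.e. vectors $x = [x_1 \enspace x_2]^T$ with $x_1, x_2 \in \mathbb{C}^n$, $x_1$ having at most $k$ nonzero entries and $x_2$ having at most $t$ nonzero entries. *)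

From HB Require Import structures.
From mathcomp Require Import all_boot all_order all_algebra.
From mathcomp Require Import reals complex.
From mathcomp Require Export spectral sesquilinear.
Set Implicit Arguments. Unset Strict Implicit. Unset Printing Implicit Defensive.
Import Order.TTheory GRing.Theory Num.Theory.
Local Open Scope ring_scope.

Definition sqnorm {C : numClosedFieldType} {m : nat} (x : 'cV[C]_m) : C :=
  \sum_(i < m) `|x i 0| ^+ 2.

Definition nnz {C : numClosedFieldType} {m : nat} (x : 'cV[C]_m) : nat :=
  #|[set i : 'I_m | x i 0 != 0]|.

Definition sparse_kt {C : numClosedFieldType} (n k t : nat) (x : 'cV[C]_(n + n)) : Prop :=
  (nnz (usubmx x) <= k)%N /\ (nnz (dsubmx x) <= t)%N.

(** Write [x = [u; v]], so that [A x = F u + v].  Since [F] is unitary,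
    [||A x||^2 = ||u||^2 + ||v||^2 + 2 Re <F u, v>], and it suffices to bound the
    cross term.  Entrywise, [|<F u, v>| <= sqrt(c/n) ||u||_1 ||v||_1], and on
    vectors with [k] (resp. [t]) nonzero entries Cauchy-Schwarz gives
    [||u||_1 <= sqrt k ||u||] and [||v||_1 <= sqrt t ||v||]; AM-GM finishes with
    [2 ||u|| ||v|| <= ||u||^2 + ||v||^2 = ||x||^2]. *)

From HB Require Import structures.
From mathcomp Require Import all_boot all_order all_algebra.
From mathcomp Require Import reals complex spectral sesquilinear.
From mathcomp Require Import ring.
Set Implicit Arguments. Unset Strict Implicit. Unset Printing Implicit Defensive.
Import Order.TTheory GRing.Theory Num.Theory.
Local Open Scope ring_scope.

Section SparseCrossTerm.
Variable C : numClosedFieldType.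

Definition cdotmx {m : nat} (y v : 'cV[C]_m) : C := \sum_i y i 0 * (v i 0)^*.

Definition l1norm {m : nat} (y : 'cV[C]_m) : C := \sum_i `|y i 0|.

Lemma sqnorm_ge0 m (y : 'cV[C]_m) : 0 <= sqnorm y.
Proof. by apply: sumr_ge0 => i _; apply: exprn_ge0. Qed.

Lemma l1norm_ge0 m (y : 'cV[C]_m) : 0 <= l1norm y.
Proof. by apply: sumr_ge0 => i _; apply: normr_ge0. Qed.

Lemma sqnorm_vsubmx m1 m2 (x : 'cV[C]_(m1 + m2)) :
  sqnorm x = sqnorm (usubmx x) + sqnorm (dsubmx x).
Proof.
by rewrite /sqnorm big_split_ord; congr (_ + _); apply: eq_bigr => i _; rewrite mxE.
Qed.

Lemma mul_row_mx1 m n (F : 'M[C]_(m, n)) (x : 'cV[C]_(n + m)) :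
  row_mx F 1%:M *m x = F *m usubmx x + dsubmx x.
Proof. by rewrite -{1}(vsubmxK x) mul_row_col mul1mx. Qed.

Lemma sqnormD m (y v : 'cV[C]_m) :
  sqnorm (y + v) = sqnorm y + sqnorm v + (cdotmx y v + (cdotmx y v)^*).
Proof.
rewrite /sqnorm /cdotmx rmorph_sum -!big_split; apply: eq_bigr => i _ /=.
by rewrite !mxE !normCK rmorphD rmorphM /= conjCK; ring.
Qed.

Section Unitary.
Local Open Scope sesquilinear_scope.

Lemma sqnorm_mulmx_unitary m (F : 'M[C]_m) (u : 'cV[C]_m) :
  F \is unitarymx -> sqnorm (F *m u) = sqnorm u.
Proof.
move=> F_unitary.
have sqnormE (y : 'cV[C]_m) : sqnorm y = (y ^t* *m y) 0 0.
  by rewrite /sqnorm mxE; apply: eq_bigr => i _; rewrite !mxE normCK mulrC.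
have FtF1 : F ^t* *m F = 1%:M.
  by move: F_unitary; rewrite -trmxC_unitary => /unitarymxP; rewrite trmxCK.
by rewrite !sqnormE trmx_mul map_mxM -mulmxA (mulmxA (F ^t*)) FtF1 mul1mx.
Qed.

End Unitary.

Lemma norm_cdotmx_mulmx_le m (F : 'M[C]_m) (u v : 'cV[C]_m) (b : C) :
  (forall i j, `|F i j| <= b) ->
  `|cdotmx (F *m u) v| <= b * l1norm u * l1norm v.
Proof.
move=> leFb; apply: le_trans (ler_norm_sum _ _ _) _.
rewrite /l1norm mulr_sumr; apply: ler_sum => i _.
rewrite normrM norm_conjC ler_wpM2r // mxE mulr_sumr.
apply: le_trans (ler_norm_sum _ _ _) _; apply: ler_sum => j _.
by rewrite normrM ler_wpM2r.
Qed.

Lemma sum_sqr_le_card (I : finType) (S : {set I}) (a : I -> C) :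
  (forall i, a i \is Num.real) ->
  (\sum_(i in S) a i) ^+ 2 <= #|S|%:R * \sum_(i in S) a i ^+ 2.
Proof.
move=> a_real; rewrite -(ler_pMn2r (n := 2)) // expr2 mulr_suml.
have le_ij i j : a i * a j *+ 2 <= a i ^+ 2 + a j ^+ 2.
  exact: real_leif_mean_square_scaled.
apply: (@le_trans _ _ (\sum_(i in S) \sum_(j in S) (a i ^+ 2 + a j ^+ 2))).
  rewrite -sumrMnl; apply: ler_sum => i _.
  by rewrite mulr_sumr -sumrMnl; apply: ler_sum => j _.
rewrite (eq_bigr _ (fun i _ => big_split _ _ _ _ _)) big_split /=.
rewrite [X in _ + X]exchange_big -mulr2n ler_pMn2r // mulr_sumr.
by apply: ler_sum => i _; rewrite sumr_const mulr_natl.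
Qed.

Lemma l1norm_sqr_le m (y : 'cV[C]_m) : l1norm y ^+ 2 <= (nnz y)%:R * sqnorm y.
Proof.
pose S := [set j | y j 0 != 0].
have restrict_S (f : C -> C) : f 0 = 0 ->
    \sum_j f `|y j 0| = \sum_(j in S) f `|y j 0|.
  move=> f0; rewrite [RHS]big_mkcond; apply: eq_bigr => j _; rewrite inE.
  by case: eqP => // ->; rewrite normr0.
rewrite /l1norm /sqnorm (restrict_S id) // (restrict_S (fun a => a ^+ 2)) ?expr0n //.
by apply: sum_sqr_le_card => j; apply: normr_real.
Qed.

Lemma sqrt_weighted_AGM (d a b p q U V : C) :
  0 <= d -> 0 <= a -> 0 <= b -> 0 <= p -> 0 <= q -> 0 <= U -> 0 <= V ->
  a ^+ 2 <= p * U -> b ^+ 2 <= q * V ->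
  sqrtC d * a * b *+ 2 <= sqrtC (d * p * q) * (U + V).
Proof.
move=> d_ge0 a_ge0 b_ge0 p_ge0 q_ge0 U_ge0 V_ge0 leaU lebV.
have lhs_ge0 : 0 <= sqrtC d * a * b *+ 2 by rewrite mulrn_wge0 ?mulr_ge0 ?sqrtC_ge0.
have rhs_ge0 : 0 <= sqrtC (d * p * q) * (U + V).
  by rewrite mulr_ge0 ?sqrtC_ge0 ?mulr_ge0 ?addr_ge0.
rewrite -(ler_pXn2r (n := 2)) ?nnegrE // -mulr_natr !exprMn !sqrtCK.
apply: (@le_trans _ _ (d * (p * U) * (q * V) * 2 ^+ 2)).
  by rewrite ler_wpM2r ?exprn_ge0 // ler_pM ?mulr_ge0 ?exprn_ge0 // ler_wpM2l.
have -> : d * (p * U) * (q * V) * 2 ^+ 2 = d * p * q * (U * V *+ 4).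
  by rewrite -mulr_natr; ring.
rewrite ler_wpM2l ?mulr_ge0 //.
exact: real_leif_AGM2_scaled (ger0_real U_ge0) (ger0_real V_ge0).
Qed.

Lemma cross_term_le m (F : 'M[C]_m) (u v : 'cV[C]_m) (d : C) :
  0 <= d -> (forall i j, `|F i j| ^+ 2 <= d) ->
  `|cdotmx (F *m u) v| *+ 2 <=
    sqrtC (d * (nnz u)%:R * (nnz v)%:R) * (sqnorm u + sqnorm v).
Proof.
move=> d_ge0 leFd.
have leFb i j : `|F i j| <= sqrtC d.
  by rewrite -(sqrCK (normr_ge0 _)) ler_sqrtC ?nnegrE ?exprn_ge0.
apply: le_trans (ler_wMn2r 2 (norm_cdotmx_mulmx_le u v leFb)) _.
by apply: sqrt_weighted_AGM;
  rewrite ?l1norm_ge0 ?sqnorm_ge0 ?l1norm_sqr_le ?ler0n.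
Qed.

End SparseCrossTerm.

Theorem theorem5 (R : realType) (n k t : nat) (F : 'M[R[i]]_n) (c : R[i]) :
  F \is unitarymx ->
  0 < c ->
  (forall i j : 'I_n, `|F i j| ^+ 2 <= c / n%:R) ->
  (1 <= k <= n)%N -> (1 <= t <= n)%N ->
  forall x : 'cV[R[i]]_(n + n), sparse_kt k t x ->
    let A : 'M[R[i]]_(n, n + n) := row_mx F 1%:M in
    (1 - sqrtC (c * k%:R * t%:R / n%:R)) * sqnorm x <= sqnorm (A *m x) /\
    sqnorm (A *m x) <= (1 + sqrtC (c * k%:R * t%:R / n%:R)) * sqnorm x.
Proof.
move=> F_unitary c_gt0 leF _ _ x [nnz_u nnz_v] A.
rewrite /A mul_row_mx1 sqnormD sqnorm_mulmx_unitary // (sqnorm_vsubmx x).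
set u := usubmx x; set v := dsubmx x; set z := cdotmx _ _.
set s := sqrtC _; set UV := sqnorm u + sqnorm v.
have cn_ge0 : 0 <= c / n%:R by rewrite divr_ge0 // ltW.
have le_s : sqrtC (c / n%:R * (nnz u)%:R * (nnz v)%:R) <= s.
  rewrite /s; have -> : c * k%:R * t%:R / n%:R = c / n%:R * (k%:R * t%:R) by ring.
  rewrite ler_sqrtC ?nnegrE ?mulr_ge0 ?invr_ge0 ?ler0n ?(ltW c_gt0) //.
  by rewrite -mulrA ler_wpM2l // ler_pM // ler_nat.
have le_cross : `|z + z^*| <= s * UV.
  apply: le_trans (ler_normD _ _) _; rewrite norm_conjC -mulr2n.
  apply: le_trans (cross_term_le u v cn_ge0 leF) _.
  by rewrite ler_wpM2r ?addr_ge0 ?sqnorm_ge0.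
have z_real : z + z^* \is Num.real by rewrite CrealE rmorphD /= conjCK addrC.
move: le_cross; rewrite real_ler_norml // => /andP[lo hi].
by rewrite mulrBl mulrDl mul1r !lerD2l lo hi.
Qed.
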